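(* Let $d\geq 2$ and $n\geq 1$ be integers, let $k$ be an integer with $0\leq k\leq\lfloor\log_d n\rfloor$, and let $\mathbf d=(1,d,d^2,\ldots,d^k)$. Let $\mathbf p_{\mathbf d,d}(n)$ denote the number of integer tuples $(x_0,\ldots,x_k)$ with $\sum_{i=0}^k d^ix_i=n$, $x_i\geq 0$ and $x_i\equiv 0$ or $x_i\equiv 1\pmod d$ for all $i$. Then $$\mathbf p_{\mathbf d,d}(n)=\frac{1}{k!}\sum_{\substack{\varepsilon\in\{0,1\}^{k+1},\ 0\leq j_i\leq d^{k-i}-1,\ 0\leq i\leq k-1\\ \sum_{i=0}^{k-1}d^{i+1}j_i+\sum_{i=0}^k d^i\varepsilon_i\equiv n\pmod{d^{k+1}}}}\ \prod_{\ell=1}^{k}\left(\frac{n-\sum_{i=0}^{k-1}d^{i+1}j_i-\sum_{i=0}^k d^i\varepsilon_i}{d^{k+1}}+\ell\right),$$ where $\varepsilon=(\varepsilon_0,\ldots,\varepsilon_k)$. Moreover, the polynomial part of $\mathbf p_{\mathbf d,d}$ is $$P_{\mathbf d,d}(n)=\frac{1}{k!\,d^{k+1}}\sum_{\varepsilon\in\{0,1\}^{k+1},\ 0\leq j_i\leq d^{k-i}-1,\ 0\leq i\leq k-1}\ \prod_{\ell=1}^{k}\left(\frac{n-\sum_{i=0}^{k-1}d^{i+1}j_i-\sum_{i=0}^k d^i\varepsilon_i}{d^{k+1}}+\ell\right).$$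
   Context: The polynomial part $P_{\mathbf d,d}(n)$ of $\mathbf p_{\mathbf d,d}$ is the polynomial in $n$ given by the coefficient of $t^{-1}$ in the Laurent expansion at $t=0$ of $e^{nt}\prod_{i=0}^k\dfrac{1+e^{-d^it}}{1-e^{-d^{i+1}t}}$. *)

From HB Require Import structures.
From mathcomp Require Import all_boot all_order all_algebra.
Set Implicit Arguments. Unset Strict Implicit. Unset Printing Implicit Defensive.
Import Order.TTheory GRing.Theory Num.Theory.
Local Open Scope ring_scope.

Section FPS.
Variable R : fieldType.

(* sum_m a m t^m is represented by a : nat -> R *)
Definition fps_one : nat -> R := fun m => (m == 0%N)%:R.
Definition fps_add (a b : nat -> R) : nat -> R := fun m => a m + b m.
Definition fps_sub (a b : nat -> R) : nat -> R := fun m => a m - b m.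
Definition fps_mul (a b : nat -> R) : nat -> R :=
  fun m => \sum_(i < m.+1) a i * b (m - i)%N.
Definition fps_exp (c : R) : nat -> R := fun m => c ^+ m / (m`!)%:R.

Fixpoint fps_inv_seq (a : nat -> R) (m : nat) : seq R :=
  match m with
  | 0%N => [:: (a 0%N)^-1]
  | m'.+1 => let s := fps_inv_seq a m' in
      rcons s (- (a 0%N)^-1 * \sum_(i < m'.+1) a i.+1 * nth 0 s (m' - i)%N)
  end.
Definition fps_inv (a : nat -> R) : nat -> R := fun m => nth 0 (fps_inv_seq a m) m.

(* Laurent expansion at t = 0 of N(t)/D(t), where D(t) = t^v * D'(t) with
   D'(0) != 0 (i.e. D has order v): the coefficient of t^e is the coefficient
   of t^(e+v) in the power series N * D'^{-1}. *)
Definition laurent_coef (N D : nat -> R) (v : nat) (e : int) : R :=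
  match (e + v%:Z)%R with
  | Posz m => fps_mul N (fps_inv (fun j => D (j + v)%N)) m
  | Negz _ => 0
  end.
End FPS.

(* p_{d,d}(n) for the vector (1,d,...,d^k): number of (x_0,...,x_k) in N^{k+1}
   with sum_i d^i x_i = n and x_i = 0 or 1 mod d.  Every solution satisfies
   x_i <= n, so we count in {0..n}^{k+1}. *)
Definition pdd (d k n : nat) : nat :=
  #|[set x : {ffun 'I_k.+1 -> 'I_n.+1} |
      ((\sum_(i < k.+1) d ^ i * x i)%N == n) &&
      [forall i, (x i %% d == 0)%N || (x i %% d == 1)%N]]|.

(* P_{d,d}(x): coefficient of t^{-1} in the Laurent expansion at 0 of
   e^{x t} prod_{i=0}^k (1 + e^{-d^i t}) / (1 - e^{-d^{i+1} t}).
   The denominator prod_i (1 - e^{-d^{i+1} t}) has order exactly k+1 at 0. *)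
Definition ppart_num (d k : nat) (x : rat) : nat -> rat :=
  fps_mul (fps_exp x)
    (\big[@fps_mul _/@fps_one _]_(i < k.+1)
        fps_add (@fps_one _) (fps_exp (- (d ^ i)%:R))).
Definition ppart_den (d k : nat) : nat -> rat :=
  \big[@fps_mul _/@fps_one _]_(i < k.+1)
     fps_sub (@fps_one _) (fps_exp (- (d ^ i.+1)%:R)).
Definition polypart (d k : nat) (x : rat) : rat :=
  laurent_coef (ppart_num d k x) (ppart_den d k) k.+1 (-1).

Definition shiftS (d k : nat) (eps : {ffun 'I_k.+1 -> bool}) (j : {ffun 'I_k -> 'I_(d ^ k)}) : nat :=
  (\sum_(i < k) d ^ i.+1 * j i + \sum_(i < k.+1) d ^ i * eps i)%N.

Definition prodterm (d k : nat) (x : rat) (S : nat) : rat :=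
  \prod_(1 <= l < k.+1) ((x - S%:R) / (d ^ k.+1)%:R + l%:R).

Definition jadm (d k : nat) (j : {ffun 'I_k -> 'I_(d ^ k)}) : bool :=
  [forall i : 'I_k, (j i < d ^ (k - i))%N].

From HB Require Import structures.
From mathcomp Require Import all_boot all_order all_algebra.
From mathcomp Require Import ring zify.
From Stdlib Require Import Setoid Morphisms.
Import Order.TTheory GRing.Theory Num.Theory.
Local Open Scope ring_scope.

(* Multiplying numerator and denominator by
     Q(z) = \prod_(i < k) \sum_(j < d^(k-i)) z^(d^(i+1) j)
   telescopes the geometric sums and gives
     \prod_i (1 + z^(d^i)) / (1 - z^(d^(i+1)))
       = \sum_(eps, j) z^S(eps,j) / (1 - z^(d^(k+1)))^(k+1),
   where S(eps,j) = shiftS eps j.  For z = t the left-hand side is the generating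
   function of p_{d,d} (modulo t^(n+1)), and the coefficient of t^n in
   t^S / (1 - t^D)^(k+1) is a binomial coefficient, which is the product term.
   For z = e^(-t) the polynomial part becomes a sum over (eps, j) of the residues
   r_k(x - S) of e^(yt) / (1 - e^(-ct))^(k+1) at 0, c = d^(k+1).  Since the residue of
   the derivative of e^(yt) (1 - e^(-ct))^(-k) vanishes and (1 - e^(-ct))' = c e^(-ct),
   k c r_k(y) = (y + k c) r_(k-1)(y), so r_k(y) = (k! c)^-1 \prod_(l = 1..k) (y/c + l). *)

Definition eqmodX {R : nzSemiRingType} (L : nat) (p q : {poly R}) : Prop :=
  forall i, (i < L)%N -> p`_i = q`_i.

Notation "p = q %[modX L ]" := (eqmodX L p q)
  (at level 70, q at next level, format "p  =  q  %[modX  L ]") : ring_scope.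

(* The morphism instances are stated over the structure parametrizing the canonical
   instances of {poly R}, so that setoid rewriting finds them for any coefficient ring. *)
Section TruncatedEquality.
Variable R : nzSemiRingType.
Implicit Types (p q : {poly R}) (L : nat).

Lemma eqmodX_equiv L : Equivalence (@eqmodX R L).
Proof. by split=> [p|p q h|p q r h1 h2] i hi; rewrite ?h ?h1 ?h2. Qed.

Lemma eqmodXD L : Proper (eqmodX L ==> eqmodX L ==> eqmodX L) (@GRing.add {poly R}).
Proof. by move=> p q h p' q' h' i hi; rewrite !coefD h ?h'. Qed.

Lemma eqmodXM L : Proper (eqmodX L ==> eqmodX L ==> eqmodX L) (@GRing.mul {poly R}).
Proof.
move=> p q h p' q' h' i hi; rewrite !coefM; apply: eq_bigr => j _.
have hj : (j < L)%N by apply: leq_ltn_trans hi; rewrite -ltnS.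
by rewrite h // h' //; apply: leq_ltn_trans hi; apply: leq_subr.
Qed.

Lemma eqmodXMn L : Proper (eqmodX L ==> eq ==> eqmodX L) (@GRing.natmul {poly R}).
Proof. by move=> p q h m _ <- i hi; rewrite !coefMn h. Qed.

Lemma eqmodXX L : Proper (eqmodX L ==> eq ==> eqmodX L) (@GRing.exp {poly R}).
Proof.
move=> p q h m _ <-; elim: m => [|m IH]; first by rewrite !expr0.
by rewrite !exprS; apply: eqmodXM.
Qed.

End TruncatedEquality.

Lemma eqmodXN (R : nzRingType) L :
  Proper (eqmodX L ==> eqmodX L) (@GRing.opp {poly R}).
Proof. by move=> p q h i hi; rewrite !coefN h. Qed.

Existing Instances eqmodX_equiv eqmodXD eqmodXN eqmodXM eqmodXMn eqmodXX.

Section TruncatedEqualityTheory.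
Context {R : nzSemiRingType}.
Implicit Types (p q : {poly R}) (L : nat).

Lemma eq_eqmodX {L p q} : p = q -> p = q %[modX L].
Proof. by move->. Qed.

Lemma eqmodXW {L L' p q} : (L' <= L)%N -> p = q %[modX L] -> p = q %[modX L'].
Proof. by move=> hL h i hi; apply: h; apply: leq_trans hL. Qed.

Lemma eqmodX_prod {L I} {r : seq I} {P : pred I} {F G : I -> {poly R}} :
  (forall i, P i -> F i = G i %[modX L]) ->
  \prod_(i <- r | P i) F i = \prod_(i <- r | P i) G i %[modX L].
Proof.
move=> h; elim/big_rec2: _ => [|i y1 y2 Pi ->]; first by [].
by rewrite h.
Qed.

Lemma eqmodX_sum {L I} {r : seq I} {P : pred I} {F G : I -> {poly R}} :
  (forall i, P i -> F i = G i %[modX L]) ->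
  \sum_(i <- r | P i) F i = \sum_(i <- r | P i) G i %[modX L].
Proof.
move=> h; elim/big_rec2: _ => [|i y1 y2 Pi ->]; first by [].
by rewrite h.
Qed.

Lemma eqmodX_mulXn2l {L s p q} :
  'X^s * p = 'X^s * q %[modX L + s] -> p = q %[modX L].
Proof.
move=> h i hi; have := h (i + s)%N; rewrite !coefXnM addnK.
by rewrite ltn_add2r (ltnNge _ s) leq_addl; apply.
Qed.

Lemma eqmodX_deriv {L p q} : p = q %[modX L.+1] -> p^`() = q^`() %[modX L].
Proof. by move=> h i hi; rewrite !coef_deriv h. Qed.

Lemma eqmodX_Xn0 {L s} : (L <= s)%N -> ('X^s : {poly R}) = 0 %[modX L].
Proof.
move=> hs i hi; rewrite coefXn coef0; case: eqP => // ei.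
by move: hi hs; rewrite ei; lia.
Qed.

End TruncatedEqualityTheory.

Lemma coef_prod_lt (R : nzSemiRingType) m (F : 'I_m -> {poly R}) j :
  (forall i, (F i)`_0 = 0) -> (j < m)%N -> (\prod_(i < m) F i)`_j = 0.
Proof.
elim: m F j => [|m IH] F j F0 // j_lt; rewrite big_ord_recl coefM big1 // => [[[|l] hl]] _.
  by rewrite F0 mul0r.
by rewrite IH ?mulr0 //=; move: hl j_lt; lia.
Qed.

Section SeriesAsPolynomials.
Context {R : fieldType}.
Implicit Types (a b : nat -> R) (L : nat).

Definition poly_fps L a : {poly R} := \poly_(i < L) a i.

Lemma coef_poly_fps {L a i} : (i < L)%N -> (poly_fps L a)`_i = a i.
Proof. by move=> hi; rewrite coef_poly hi. Qed.

Lemma poly_fps_le {L L' a} : (L <= L')%N -> poly_fps L a = poly_fps L' a %[modX L].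
Proof.
by move=> hL i hi; rewrite !coef_poly_fps //; apply: leq_trans hL.
Qed.

Lemma coef_poly_fpsM L a b m : (m < L)%N ->
  (poly_fps L a * poly_fps L b)`_m = fps_mul a b m.
Proof.
move=> hm; rewrite coefM; apply: eq_bigr => j _.
by rewrite !coef_poly_fps //; move: (ltn_ord j) hm; lia.
Qed.

Lemma poly_fps_mul L a b :
  poly_fps L (fps_mul a b) = poly_fps L a * poly_fps L b %[modX L].
Proof. by move=> i hi; rewrite coef_poly_fpsM // coef_poly_fps. Qed.

Lemma poly_fps_add L a b : poly_fps L (fps_add a b) = poly_fps L a + poly_fps L b.
Proof. by apply/polyP => i; rewrite coefD !coef_poly; case: ifP; rewrite ?addr0. Qed.

Lemma poly_fps_sub L a b : poly_fps L (fps_sub a b) = poly_fps L a - poly_fps L b.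
Proof. by apply/polyP => i; rewrite coefB !coef_poly; case: ifP; rewrite ?subr0. Qed.

Lemma poly_fps_one L : (0 < L)%N -> poly_fps L (@fps_one R) = 1.
Proof.
move=> hL; apply/polyP => i; rewrite coef1 coef_poly /fps_one.
by case: ltnP => // hLi; rewrite (gtn_eqF (leq_trans hL hLi)).
Qed.

Lemma poly_fps_prod L m (F : 'I_m -> nat -> R) : (0 < L)%N ->
  poly_fps L (\big[@fps_mul R/@fps_one R]_(i < m) F i)
  = \prod_(i < m) poly_fps L (F i) %[modX L].
Proof.
move=> hL; elim: m F => [|m IH] F; first by rewrite !big_ord0 poly_fps_one.
by rewrite !big_ord_recl poly_fps_mul IH.
Qed.

Lemma size_fps_inv_seq a m : size (fps_inv_seq a m) = m.+1.
Proof. by elim: m => [|m IH] //=; rewrite size_rcons IH. Qed.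

Lemma nth_fps_inv_seq a m i : (i <= m)%N -> nth 0 (fps_inv_seq a m) i = fps_inv a i.
Proof.
elim: m => [|m IH]; first by rewrite leqn0 => /eqP ->.
rewrite leq_eqVlt => /orP [/eqP -> //| hi].
by rewrite /= nth_rcons size_fps_inv_seq hi IH.
Qed.

Lemma fps_mulV a : a 0%N != 0 -> forall m, fps_mul a (fps_inv a) m = (m == 0%N)%:R.
Proof.
move=> a0 [|m]; first by rewrite /fps_mul big_ord1 /fps_inv /= mulfV.
have inv_rec : fps_inv a m.+1 =
    - (a 0%N)^-1 * \sum_(i < m.+1) a i.+1 * fps_inv a (m - i)%N.
  rewrite /fps_inv /= nth_rcons size_fps_inv_seq ltnn eqxx; congr (_ * _).
  by apply: eq_bigr => i _; rewrite nth_fps_inv_seq // leq_subr.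
by rewrite /fps_mul big_ord_recl subn0 inv_rec mulrA mulrN mulfV // mulN1r addNr.
Qed.

Lemma poly_fps_mulV L a : a 0%N != 0 ->
  poly_fps L a * poly_fps L (fps_inv a) = 1 %[modX L].
Proof. by move=> a0 i hi; rewrite coef_poly_fpsM // fps_mulV // coef1. Qed.

End SeriesAsPolynomials.

Section Exponential.
Context {R : numFieldType}.
Implicit Types (a b c : R) (L : nat).

Definition expX L c : {poly R} := poly_fps L (fps_exp c).

Lemma coef0_expX L c : (0 < L)%N -> (expX L c)`_0 = 1.
Proof. by move=> hL; rewrite coef_poly_fps // /fps_exp expr0 divr1. Qed.

Lemma expX0 L : (0 < L)%N -> expX L 0 = 1.
Proof.
move=> hL; apply/polyP => i; rewrite coef1 coef_poly /fps_exp expr0n.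
by case: i => [|i]; rewrite ?hL ?divr1 //= mul0r; case: ifP.
Qed.

Lemma fact_neq0 m : ((m`!)%:R : R) != 0.
Proof. by rewrite pnatr_eq0 -lt0n fact_gt0. Qed.

Lemma fps_expD a b m : fps_mul (fps_exp a) (fps_exp b) m = fps_exp (a + b) m.
Proof.
rewrite /fps_mul /fps_exp addrC exprDn mulr_suml; apply: eq_bigr => i _.
have hi : (i <= m)%N by rewrite -ltnS.
have := bin_fact hi => /(congr1 (fun z => z%:R : R)); rewrite !natrM => hf.
rewrite -mulr_natr -hf.
have h3 : ('C(m, i)%:R : R) != 0 by rewrite pnatr_eq0 -lt0n bin_gt0.
by field; rewrite !fact_neq0 h3.
Qed.

Lemma expXD L a b : expX L a * expX L b = expX L (a + b) %[modX L].
Proof. by move=> i hi; rewrite coef_poly_fpsM // fps_expD coef_poly_fps. Qed.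

Lemma expXMn L c s : (0 < L)%N -> expX L c ^+ s = expX L (c *+ s) %[modX L].
Proof.
move=> hL; elim: s => [|s IH]; first by rewrite expr0 mulr0n expX0.
by rewrite exprS IH expXD mulrS.
Qed.

Lemma deriv_expX L c : (expX L.+1 c)^`() = c%:P * expX L.+1 c %[modX L].
Proof.
move=> i hi; rewrite coef_deriv coefCM !coef_poly_fps //; last exact: ltnW.
rewrite /fps_exp factS natrM exprS -mulr_natr.
by field; rewrite fact_neq0 addrC natr1 pnatr_eq0.
Qed.

End Exponential.

Lemma expn_splitS d {k} (i : 'I_k) : (d ^ k.+1 = d ^ i.+1 * d ^ (k - i))%N.
Proof. by rewrite -expnD; congr (expn _ _); move: (ltn_ord i); lia. Qed.

Section ShiftIdentities.
Context {R : comNzRingType}.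
Variables (d k : nat) (z : R).

Definition digit_cofactor : R :=
  \prod_(i < k) \sum_(j < d ^ (k - i)) z ^+ (d ^ i.+1 * j).

Lemma prod_1Dz_cofactor : (0 < d)%N ->
  \prod_(i < k.+1) (1 + z ^+ (d ^ i)) * digit_cofactor =
  \sum_(eps : {ffun 'I_k.+1 -> bool})
    \sum_(j : {ffun 'I_k -> 'I_(d ^ k)} | jadm j) z ^+ shiftS eps j.
Proof.
move=> d_gt0.
have -> : \prod_(i < k.+1) (1 + z ^+ (d ^ i)) =
    \sum_(eps : {ffun 'I_k.+1 -> bool}) z ^+ (\sum_(i < k.+1) d ^ i * eps i).
  rewrite (eq_bigr (fun i : 'I_k.+1 => \sum_(b : bool) z ^+ (d ^ i * b))); last first.
    by move=> i _; rewrite big_bool /= muln1 muln0 expr0 addrC.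
  by rewrite bigA_distr_bigA; apply: eq_bigr => eps _; rewrite prodrXr.
have -> : digit_cofactor =
    \sum_(j : {ffun 'I_k -> 'I_(d ^ k)} | jadm j) z ^+ (\sum_(i < k) d ^ i.+1 * j i).
  rewrite /digit_cofactor (eq_bigr (fun i : 'I_k =>
      \sum_(j : 'I_(d ^ k) | (j < d ^ (k - i))%N) z ^+ (d ^ i.+1 * j))); last first.
    move=> i _; rewrite (big_ord_widen (d ^ k) (fun j => z ^+ (d ^ i.+1 * j))) //.
    by rewrite leq_pexp2l // leq_subr.
  rewrite bigA_distr_big_dep; apply: eq_big => [j | j _]; last by rewrite prodrXr.
  by apply/familyP/forallP.
rewrite mulr_suml; apply: eq_bigr => eps _; rewrite mulr_sumr; apply: eq_bigr => j _.
by rewrite -exprD addnC.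
Qed.

Lemma prod_1Bz_cofactor :
  \prod_(i < k.+1) (1 - z ^+ (d ^ i.+1)) * digit_cofactor = (1 - z ^+ (d ^ k.+1)) ^+ k.+1.
Proof.
rewrite big_ord_recr /= mulrAC /digit_cofactor -big_split /= exprSr; congr (_ * _).
transitivity (\prod_(i < k) (1 - z ^+ (d ^ k.+1))); last by rewrite prodr_const card_ord.
apply: eq_bigr => i _.
rewrite (expn_splitS d i); under eq_bigr do rewrite exprM.
by rewrite exprM -[RHS]opprB subrX1 -mulNr opprB.
Qed.

End ShiftIdentities.

Lemma shiftS_le {d k} {eps : {ffun 'I_k.+1 -> bool}} {j : {ffun 'I_k -> 'I_(d ^ k)}} :
  jadm j -> (shiftS eps j <= k * d ^ k.+1 + 1)%N.
Proof.
move=> /forallP hj.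
have j_part : (\sum_(i < k) d ^ i.+1 * j i + \sum_(i < k) d ^ i.+1 <= k * d ^ k.+1)%N.
  have -> : (k * d ^ k.+1 = \sum_(i < k) d ^ k.+1)%N by rewrite sum_nat_const card_ord.
  rewrite -big_split /=; apply: leq_sum => i _.
  by rewrite -mulnSr (expn_splitS d i) leq_mul2l hj orbT.
have eps_part : (\sum_(i < k.+1) d ^ i * eps i <= 1 + \sum_(i < k) d ^ i.+1)%N.
  rewrite big_ord_recl expn0 mul1n; apply: leq_add; first by case: (eps ord0).
  by apply: leq_sum => i _; case: (eps _); rewrite ?muln1 ?muln0.
by rewrite /shiftS; lia.
Qed.

Section BinomialSeries.
Context {R : comNzRingType}.
Variables (D N : nat).
Hypothesis D_gt0 : (0 < D)%N.

Definition binom_series K : {poly R} :=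
  \poly_(m < N) (if (D %| m)%N then ('C(m %/ D + K, K))%:R else 0).

Lemma coef_mul_1BXn (p : {poly R}) m :
  (p * (1 - 'X^D))`_m = p`_m - (if (D <= m)%N then p`_(m - D) else 0).
Proof. by rewrite mulrBr mulr1 coefB coefMXn ltnNge; case: (D <= m)%N. Qed.

Lemma binom_series0_mul1BXn : binom_series 0 * (1 - 'X^D) = 1 %[modX N].
Proof.
move=> m hm; rewrite coef_mul_1BXn coef1 !coef_poly hm !bin0.
have [hDm | hmD] := leqP D m.
  move: hm; rewrite -(subnK hDm) addnK; move: (m - D)%N => m' hm.
  rewrite (leq_ltn_trans (leq_addr D m') hm) dvdn_addl // subrr.
  by rewrite addn_eq0 (negbTE (lt0n_neq0 D_gt0)) andbF.
have [-> | m_gt0] := posnP m; first by rewrite dvdn0 subr0.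
by rewrite (gtnNdvd m_gt0 hmD) subr0.
Qed.

Lemma binom_seriesS_mul1BXn K :
  binom_series K.+1 * (1 - 'X^D) = binom_series K %[modX N].
Proof.
move=> m hm; rewrite coef_mul_1BXn !coef_poly hm.
have [hDm | hmD] := leqP D m.
  move: hm; rewrite -(subnK hDm) addnK; move: (m - D)%N => m' hm.
  rewrite (leq_ltn_trans (leq_addr D m') hm) dvdn_addl //.
  case: ifP => [hdvd | _]; last by rewrite subrr.
  rewrite divnDl // divnn D_gt0 addn1 addSn binS natrD addrC addKr.
  by rewrite addnS addSn.
have [-> | m_gt0] := posnP m; first by rewrite dvdn0 div0n !add0n !binn subr0.
by rewrite (gtnNdvd m_gt0 hmD) subr0.
Qed.

Lemma mul1BXn_binom_series K :
  (1 - 'X^D) ^+ K.+1 * binom_series K = 1 %[modX N].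
Proof.
elim: K => [|K IH]; first by rewrite expr1 mulrC binom_series0_mul1BXn.
by rewrite exprS mulrAC [_ * binom_series _]mulrC binom_seriesS_mul1BXn mulrC.
Qed.

End BinomialSeries.

Section DigitSums.
Context {R : comNzRingType}.
Variable d : nat.
Hypothesis d_gt1 : (1 < d)%N.

Definition digit01 (a : nat) : bool := (a %% d == 0)%N || (a %% d == 1)%N.

Lemma digit01_block_sum y s :
  \sum_(y * d <= a < y.+1 * d) (if digit01 a then 'X^(s * a) else 0 : {poly R}) =
  (1 + 'X^s) * ('X^(s * d)) ^+ y.
Proof.
have d_gt0 : (0 < d)%N by apply: ltnW.
rewrite -{1}[(y * d)%N]add0n big_addn mulSn addnK.
rewrite big_ltn // big_ltn // big_nat_cond big1 => [|r /andP [/andP [r_gt1 r_ltd] _]].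
  rewrite /digit01 add0n modnMl eqxx [(1 + _)%N]addnC modnMDl modn_small // eqxx orbT.
  rewrite addr0 mulrDl mul1r -!exprM -exprD.
  by congr (_ ^+ _ + _ ^+ _); ring.
rewrite /digit01 addnC modnMDl modn_small //.
by case: r r_gt1 {r_ltd} => [|[|r]].
Qed.

Lemma digit01_sum_mul1BXn s N : (0 < s)%N ->
  (\sum_(a < N) (if digit01 a then 'X^(s * a) else 0 : {poly R})) * (1 - 'X^(s * d))
  = 1 + 'X^s %[modX N].
Proof.
move=> s_gt0; have d_gt0 : (0 < d)%N by apply: ltnW.
pose F a : {poly R} := if digit01 a then 'X^(s * a) else 0.
have tail : \sum_(N <= a < N * d) F a = 0 %[modX N].
  rewrite big_nat_cond; transitivity (\sum_(N <= a < N * d | (N <= a < N * d)%N && true)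
    (0 : {poly R})); last by rewrite big1.
  apply: eqmodX_sum => a /andP [/andP [ha _] _]; rewrite /F; case: ifP => // _.
  by apply: eqmodX_Xn0; apply: leq_trans ha (leq_pmull a s_gt0).
have geom : (\sum_(y < N) 'X^(s * d) ^+ y) * (1 - 'X^(s * d)) =
    1 - 'X^(s * d) ^+ N :> {poly R}.
  by rewrite mulrC -opprB mulNr -subrX1 opprB.
have high : ('X^(s * d) ^+ N : {poly R}) = 0 %[modX N].
  by rewrite -exprM; apply: eqmodX_Xn0; rewrite leq_pmull // muln_gt0 s_gt0.
have widen : \sum_(0 <= a < N) F a = \sum_(0 <= a < N * d) F a %[modX N].
  by rewrite (big_cat_nat (leq0n N) (leq_pmulr N d_gt0)) /= tail addr0.
rewrite -(big_mkord xpredT F) widen.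
rewrite big_nat_mul (eq_bigr _ (fun y _ => digit01_block_sum y s)) -mulr_sumr -mulrA.
by rewrite big_mkord geom high subr0 mulr1.
Qed.

End DigitSums.

Lemma bin_fact_prod q K : ('C(q + K, K) * K`!)%N = \prod_(1 <= l < K.+1) (q + l).
Proof.
elim: K => [|K IH]; first by rewrite big_geq // bin0.
rewrite big_nat_recr //= -IH factS !addnS mulnA (mulnC _ K.+1) -mul_bin_diag /=.
by ring.
Qed.

Section ProdTerm.
Variables (d k : nat) (x : rat) (S : nat).
Let D := (d ^ k.+1)%N.

Lemma prodterm_binom q : (x - S%:R) / D%:R = q%:R -> prodterm d k x S = ('C(q + k, k) * k`!)%:R.
Proof.
rewrite /prodterm => ->; rewrite bin_fact_prod natr_prod.
by apply: eq_bigr => l _; rewrite natrD.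
Qed.

Lemma prodterm_eq0 m : (0 < m <= k)%N -> (x - S%:R) / D%:R = - m%:R -> prodterm d k x S = 0.
Proof.
move=> /andP [m_gt0 m_lek]; rewrite /prodterm => ->; apply/eqP.
rewrite prodf_seq_eq0; apply/hasP; exists m; last by rewrite addNr eqxx.
by rewrite mem_index_iota m_gt0 ltnS.
Qed.

End ProdTerm.

Section Counting.
Variables (d k n : nat).
Hypotheses (d_gt1 : (1 < d)%N) (n_gt0 : (0 < n)%N).

Let D := (d ^ k.+1)%N.
Let D_gt0 : (0 < D)%N. Proof. by rewrite expn_gt0 ltnW. Qed.

Let G : {poly rat} :=
  \prod_(i < k.+1) \sum_(a < n.+1) (if digit01 d a then 'X^(d ^ i * a) else 0).

Lemma pdd_coef : (pdd d k n)%:R = G`_n.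
Proof.
rewrite /G bigA_distr_bigA coef_sum /pdd -sum1_card natr_sum big_mkcond /=.
apply: eq_bigr => x _; rewrite inE.
case: (boolP [forall i, digit01 d (x i)]) => [/forallP x01 | /forallPn [i xi]].
  rewrite andbT (eq_bigr (fun i : 'I_k.+1 => 'X^(d ^ i * x i))) => [|i _]; last by rewrite x01.
  by rewrite prodrXr coefXn eq_sym; case: eqP.
by rewrite andbF (bigD1 i) //= (negbTE xi) mul0r coef0.
Qed.

Lemma gf_mul1BXn :
  G * (1 - 'X^D) ^+ k.+1 =
  \sum_(eps : {ffun 'I_k.+1 -> bool}) \sum_(j : {ffun 'I_k -> 'I_(d ^ k)} | jadm j)
    'X^(shiftS eps j) %[modX n.+1].
Proof.
have digit_factor (i : 'I_k.+1) :
    (\sum_(a < n.+1) (if digit01 d a then 'X^(d ^ i * a) else 0 : {poly rat}))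
      * (1 - 'X^(d ^ i.+1))
    = 1 + 'X^(d ^ i) %[modX n.+1].
  by rewrite expnSr; apply: digit01_sum_mul1BXn; rewrite // expn_gt0 ltnW.
rewrite -(prod_1Bz_cofactor d k 'X) mulrA /G -big_split /=.
by rewrite (eqmodX_prod (fun i _ => digit_factor i)) prod_1Dz_cofactor // ltnW.
Qed.

Lemma gf_binom_series :
  G = (\sum_(eps : {ffun 'I_k.+1 -> bool}) \sum_(j : {ffun 'I_k -> 'I_(d ^ k)} | jadm j)
        'X^(shiftS eps j)) * binom_series D n.+1 k %[modX n.+1].
Proof. by rewrite -gf_mul1BXn -mulrA mul1BXn_binom_series // mulr1. Qed.

Lemma coef_Xn_binom_series S : (S <= n + k * D)%N ->
  ('X^S * binom_series D n.+1 k)`_n =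
  if S == n %[mod D] then (k`!%:R)^-1 * prodterm d k n%:R S else 0.
Proof.
have D_neq0 : (D%:R : rat) != 0 by rewrite pnatr_eq0 -lt0n.
move=> S_le; rewrite coefXnM; have [n_ltS | S_len] := ltnP n S.
  case: ifP => //; rewrite eqn_mod_dvd ?(ltnW n_ltS) // => /divnK S_n.
  move: ((S - n) %/ D)%N S_n => m S_n.
  rewrite (@prodterm_eq0 _ _ _ _ m) ?mulr0 //.
    by rewrite -(ltn_pmul2r D_gt0) mul0n S_n subn_gt0 n_ltS -(leq_pmul2r D_gt0) S_n leq_subLR.
  by rewrite -opprB -natrB ?(ltnW n_ltS) // -S_n natrM mulNr mulfK.
rewrite coef_poly ltnS leq_subr eq_sym eqn_mod_dvd //.
case: ifP => // /divnK n_S.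
rewrite (@prodterm_binom _ _ _ _ ((n - S) %/ D)).
  by rewrite mulrC natrM mulfK // fact_neq0.
by rewrite -natrB // -{1}n_S natrM mulfK.
Qed.

Lemma pdd_formula :
  (pdd d k n)%:R =
  (k`!%:R)^-1 *
  \sum_(eps : {ffun 'I_k.+1 -> bool})
    \sum_(j : {ffun 'I_k -> 'I_(d ^ k)} | jadm j && (shiftS eps j == n %[mod d ^ k.+1]))
      prodterm d k n%:R (shiftS eps j).
Proof.
rewrite pdd_coef (gf_binom_series n (ltnSn n)) mulr_suml coef_sum mulr_sumr.
apply: eq_bigr => eps _; rewrite mulr_suml coef_sum big_mkcondr mulr_sumr.
apply: eq_bigr => j jadm_j; rewrite coef_Xn_binom_series; first by case: ifP; rewrite ?mulr0.
by apply: leq_trans (shiftS_le jadm_j) _; rewrite (addnC n) leq_add2l.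
Qed.

End Counting.

Section Residue.
Context {R : numFieldType}.
Variables (c : R) (L : nat).
Hypothesis c_neq0 : c != 0.

(* the series (1 - e^(-ct)) / t *)
Definition fps_1Bexp_divX : nat -> R := fun i => - (- c) ^+ i.+1 / (i.+1)`!%:R.

Let V := poly_fps L.+1 fps_1Bexp_divX.
Let I := poly_fps L.+1 (fps_inv fps_1Bexp_divX).

Lemma mulX_V : 'X * V = 1 - expX L.+1 (- c) %[modX L.+1].
Proof.
move=> [|i] hi; first by rewrite coefXM coefB coef1 coef0_expX // subrr.
rewrite coefXM coefB coef1 /= !coef_poly_fps //; last exact: ltnW.
by rewrite /fps_1Bexp_divX /fps_exp sub0r mulNr.
Qed.

Lemma mulVI : V * I = 1 %[modX L.+1].
Proof. by apply: poly_fps_mulV; rewrite /fps_1Bexp_divX expr1 opprK divr1. Qed.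

Lemma mulX_derivV : 'X * V^`() = c%:P - V - c%:P * 'X * V %[modX L].
Proof.
have e_V : expX L.+1 (- c) = 1 - 'X * V %[modX L].
  by apply: (eqmodXW (leqnSn L)); rewrite mulX_V opprB addrC subrK.
have dXV : V + 'X * V^`() = c%:P * (1 - 'X * V) %[modX L].
  have -> : V + 'X * V^`() = ('X * V)^`() by rewrite derivM derivX mul1r.
  rewrite (eqmodX_deriv mulX_V) derivB -polyC1 derivC.
  by rewrite deriv_expX e_V sub0r polyCN mulNr opprK.
by rewrite -[_ * V^`()](addKr V) dXV; apply: eq_eqmodX; ring.
Qed.

Lemma mulX_derivI : 'X * I^`() = I + c%:P * 'X * I - c%:P * I ^+ 2 %[modX L].
Proof.
have VI : V * I = 1 %[modX L] by apply: (eqmodXW (leqnSn L)) mulVI.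
have VdI : V * I^`() = - (V^`() * I) %[modX L].
  rewrite -[V * _](addKr (V^`() * I)) -derivM (eqmodX_deriv mulVI) -polyC1 derivC.
  by rewrite addr0.
transitivity ('X * I^`() * (V * I)); first by rewrite VI mulr1.
transitivity ('X * I * (V * I^`())); first by apply: eq_eqmodX; ring.
transitivity (- ('X * V^`()) * I ^+ 2); first by rewrite VdI; apply: eq_eqmodX; ring.
rewrite mulX_derivV.
transitivity (- c%:P * I ^+ 2 + (V * I) * I + c%:P * 'X * (V * I) * I).
  by apply: eq_eqmodX; ring.
by rewrite VI; apply: eq_eqmodX; ring.
Qed.

(* the residue at 0 of e^(yt) / (1 - e^(-ct))^(k+1) *)
Definition resid k y := (expX L.+1 y * I ^+ k.+1)`_k.

Lemma mulX_deriv_expXI y m :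
  'X * (expX L.+1 y * I ^+ m.+1)^`() =
  y%:P * 'X * (expX L.+1 y * I ^+ m.+1) +
  (expX L.+1 y * I ^+ m.+1 + c%:P * 'X * (expX L.+1 y * I ^+ m.+1)
    - c%:P * (expX L.+1 y * I ^+ m.+2)) *+ m.+1 %[modX L].
Proof.
rewrite derivM deriv_exp /= mulrDr.
transitivity ('X * (expX L.+1 y)^`() * I ^+ m.+1 +
              expX L.+1 y * ('X * I^`()) * I ^+ m *+ m.+1).
  by apply: eq_eqmodX; ring.
by rewrite deriv_expX mulX_derivI; apply: eq_eqmodX; rewrite !exprS; ring.
Qed.

Lemma resid0 y : resid 0 y = c^-1.
Proof.
rewrite /resid expr1 coef0M coef0_expX // mul1r coef_poly_fps // /fps_inv /=.
by rewrite /fps_1Bexp_divX expr1 opprK divr1.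
Qed.

Lemma residS k y : (k.+1 < L)%N ->
  k.+1%:R * c * resid k.+1 y = (y + k.+1%:R * c) * resid k y.
Proof.
move=> k_lt; have := mulX_deriv_expXI y k k.+1 k_lt.
rewrite coefXM coef_deriv /= !(coefD, coefN, coefMn) -!mulrA !coefCM !coefXM /=.
rewrite -/(resid k y) -/(resid k.+1 y) => /eqP; rewrite -subr_eq0 => /eqP h.
by rewrite -[LHS]subr0 -h; ring.
Qed.

Lemma residE k y : (k < L)%N ->
  resid k y = ((k`!)%:R * c)^-1 * \prod_(1 <= l < k.+1) (y / c + l%:R).
Proof.
elim: k => [|k IH] k_lt; first by rewrite resid0 big_geq // mulr1 mul1r.
have k1_neq0 : (k.+1%:R : R) != 0 by rewrite pnatr_eq0.
apply: (mulfI (mulf_neq0 k1_neq0 c_neq0)); rewrite mulrA residS // IH 1?ltnW //.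
rewrite [in RHS]big_nat_recr // factS natrM /=.
by field; rewrite c_neq0 fact_neq0 addrC natr1.
Qed.

End Residue.

Section PolynomialPart.
Variables (d k : nat) (x : rat).
Hypothesis d_gt0 : (0 < d)%N.

Let L := (k + k.+1).+1.
Let c : rat := (d ^ k.+1)%:R.
Let z := expX L (-1 : rat).
Let V := poly_fps L (fps_1Bexp_divX c).
Let I := poly_fps L (fps_inv (fps_1Bexp_divX c)).
Let Q := digit_cofactor d k z.
Let D' : nat -> rat := fun j => ppart_den d k (j + k.+1).

Let c_neq0 : c != 0. Proof. by rewrite pnatr_eq0 -lt0n expn_gt0 d_gt0. Qed.

Lemma expX_nat s : z ^+ s = expX L (- s%:R) %[modX L].
Proof. by rewrite expXMn // mulNrn. Qed.

Lemma ppart_num_eqmodX :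
  poly_fps L (ppart_num d k x) = expX L x * \prod_(i < k.+1) (1 + z ^+ (d ^ i)) %[modX L].
Proof.
rewrite poly_fps_mul poly_fps_prod //; apply: eqmodXM => //.
by apply: eqmodX_prod => i _; rewrite poly_fps_add poly_fps_one // expX_nat.
Qed.

Lemma ppart_den_eqmodX :
  poly_fps L (ppart_den d k) = \prod_(i < k.+1) (1 - z ^+ (d ^ i.+1)) %[modX L].
Proof.
rewrite poly_fps_prod //.
by apply: eqmodX_prod => i _; rewrite poly_fps_sub poly_fps_one // expX_nat.
Qed.

Lemma ppart_den_low j : (j < k.+1)%N -> ppart_den d k j = 0.
Proof.
move=> j_lt; have j_ltL : (j < L)%N by rewrite /L; lia.
rewrite -(coef_poly_fps j_ltL) (ppart_den_eqmodX j j_ltL) coef_prod_lt // => i.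
by rewrite coefB coef1 (expX_nat _ 0) // coef0_expX // subrr.
Qed.

Lemma ppart_den_shift :
  'X^(k.+1) * poly_fps k.+1 D' = poly_fps L (ppart_den d k) %[modX L].
Proof.
move=> i i_lt; rewrite coefXnM [RHS]coef_poly_fps //; case: ltnP => [/ppart_den_low -> //| k_lei].
by rewrite coef_poly_fps /D' ?subnK //; move: i_lt; rewrite /L; lia.
Qed.

Lemma ppart_den_cofactor : poly_fps k.+1 D' * Q = V ^+ k.+1 %[modX k.+1].
Proof.
apply: (@eqmodX_mulXn2l _ _ k.+1); rewrite mulrA ppart_den_shift ppart_den_eqmodX.
rewrite prod_1Bz_cofactor expX_nat -(mulX_V c (k + k.+1)).
by rewrite exprMn.
Qed.

Lemma ppart_den_mul_cofactorI : poly_fps k.+1 D' * (Q * I ^+ k.+1) = 1 %[modX k.+1].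
Proof.
have VI : V * I = 1 %[modX k.+1].
  by apply: (eqmodXW _ (mulVI c (k + k.+1) c_neq0)); rewrite ltnS leq_addr.
by rewrite mulrA ppart_den_cofactor -exprMn VI expr1n.
Qed.

Lemma fps_inv_ppart_den : poly_fps k.+1 (fps_inv D') = Q * I ^+ k.+1 %[modX k.+1].
Proof.
have D'0 : D' 0%N != 0.
  apply: contra_eq_neq (ppart_den_mul_cofactorI 0%N (ltn0Sn k)) => D'0.
  by rewrite coef0M coef_poly_fps // D'0 mul0r coef1 eq_sym oner_neq0.
rewrite -[poly_fps _ (fps_inv D')]mul1r -ppart_den_mul_cofactorI mulrAC.
by rewrite poly_fps_mulV // mul1r.
Qed.

Lemma ppart_num_cofactor :
  poly_fps L (ppart_num d k x) * Q =
  \sum_(eps : {ffun 'I_k.+1 -> bool}) \sum_(j : {ffun 'I_k -> 'I_(d ^ k)} | jadm j)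
    expX L (x - (shiftS eps j)%:R) %[modX L].
Proof.
rewrite ppart_num_eqmodX -mulrA prod_1Dz_cofactor // mulr_sumr.
apply: eqmodX_sum => eps _; rewrite mulr_sumr; apply: eqmodX_sum => j _.
by rewrite expX_nat expXD.
Qed.

Lemma polypart_resid :
  polypart d k x =
  \sum_(eps : {ffun 'I_k.+1 -> bool}) \sum_(j : {ffun 'I_k -> 'I_(d ^ k)} | jadm j)
    resid c (k + k.+1) k (x - (shiftS eps j)%:R).
Proof.
have kL : (k.+1 <= L)%N by rewrite /L ltnS leq_addr.
have -> : polypart d k x = (poly_fps k.+1 (ppart_num d k x) * poly_fps k.+1 (fps_inv D'))`_k.
  rewrite /polypart /laurent_coef coef_poly_fpsM //.
  by have -> : (-1 + (k.+1)%:Z)%R = k%:Z by rewrite -addn1 PoszD addrCA addNr addr0.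
have key : poly_fps k.+1 (ppart_num d k x) * poly_fps k.+1 (fps_inv D') =
    (\sum_(eps : {ffun 'I_k.+1 -> bool}) \sum_(j : {ffun 'I_k -> 'I_(d ^ k)} | jadm j)
       expX L (x - (shiftS eps j)%:R)) * I ^+ k.+1 %[modX k.+1].
  by rewrite fps_inv_ppart_den (poly_fps_le kL) mulrA (eqmodXW kL ppart_num_cofactor).
rewrite (key k (ltnSn k)) mulr_suml coef_sum; apply: eq_bigr => eps _.
by rewrite mulr_suml coef_sum; apply: eq_bigr.
Qed.

Lemma polypart_formula :
  polypart d k x =
  ((k`! * d ^ k.+1)%:R)^-1 *
  \sum_(eps : {ffun 'I_k.+1 -> bool}) \sum_(j : {ffun 'I_k -> 'I_(d ^ k)} | jadm j)
    prodterm d k x (shiftS eps j).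
Proof.
rewrite polypart_resid mulr_sumr; apply: eq_bigr => eps _; rewrite mulr_sumr.
by apply: eq_bigr => j _; rewrite residE ?natrM // -addSnnS ltn_addr.
Qed.

End PolynomialPart.

Theorem corollary2p4 (d n k : nat) :
  (2 <= d)%N -> (1 <= n)%N -> (k <= trunc_log d n)%N ->
  ((pdd d k n)%:R : rat) =
    ((k`!)%:R)^-1 *
    \sum_(eps : {ffun 'I_k.+1 -> bool})
      \sum_(j : {ffun 'I_k -> 'I_(d ^ k)} |
              jadm j && (shiftS eps j == n %[mod d ^ k.+1]))
        prodterm d k n%:R (shiftS eps j)
  /\
  (forall x : rat,
    polypart d k x =
    ((k`! * d ^ k.+1)%:R)^-1 *
    \sum_(eps : {ffun 'I_k.+1 -> bool})
      \sum_(j : {ffun 'I_k -> 'I_(d ^ k)} | jadm j)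
        prodterm d k x (shiftS eps j)).
Proof.
move=> d_ge2 n_ge1 _; split; first exact: pdd_formula.
by move=> x; apply: polypart_formula; apply: ltnW.
Qed.
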